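(* Let $Q\subseteq 2^{\mathbb{N}^k}$ be a clopen quantifier. Then for every $n$ and every $a\in\mathbb{N}^n$ the orbit $\{g(a):g\in\mathrm{Aut}(Q)\}$ is definable in $\mathscr{L}_{\omega\omega}(Q)$.
   Context: A quantifier of type $\langle k\rangle$ on $\mathbb{N}$ is a family $Q$ of subsets of $\mathbb{N}^k$, identified with a subset of $2^{\mathbb{N}^k}$ (product topology). A permutation $f$ of $\mathbb{N}$ fixes $Q$ if $A\in Q\iff f(A)\in Q$ for all $A\subseteq\mathbb{N}^k$, where $f$ acts coordinatewise on tuples and $f(A)=\{f(a):a\in A\}$; $\mathrm{Aut}(Q)$ is the group of such permutations. $\mathscr{L}_{\omega\omega}(Q)$ is first-order logic extended by formulas $Qx\,\varphi(x,y)$ ($x$ a $k$-tuple of variables) with $\mathbb{N}\models Qx\,\varphi(x,b)$ iff $\{a\in\mathbb{N}^k:\mathbb{N}\models\varphi(a,b)\}\in Q$. A set $B\subseteq\mathbb{N}^n$ is definable in $\mathscr{L}_{\omega\omega}(Q)$ if there is a formula $\varphi(x_1,\dots,x_n)$ whose only non-logical symbol is $Q$ such that $b\in B\iff\mathbb{N}\models\varphi(b)$. *)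

From mathcomp Require Import all_boot.
Set Implicit Arguments. Unset Strict Implicit. Unset Printing Implicit Defensive.

Definition subset_k (k : nat) := k.-tuple nat -> Prop.
Definition quantifier (k : nat) := subset_k k -> Prop.

(* Product topology on 2^{N^k}: U is open iff every A in U has a basic
   open neighbourhood (determined by finitely many coordinates) inside U. *)
Definition open_set (k : nat) (U : quantifier k) : Prop :=
  forall A : subset_k k, U A ->
    exists F : seq (k.-tuple nat),
      forall B : subset_k k, (forall x, x \in F -> (A x <-> B x)) -> U B.

Definition clopen (k : nat) (Q : quantifier k) : Prop :=
  open_set Q /\ open_set (fun A => ~ Q A).

Definition image_set (k : nat) (f : nat -> nat) (A : subset_k k) : subset_k k :=
  fun y => exists a, A a /\ y = map_tuple f a.

Definition Aut (k : nat) (Q : quantifier k) (f : nat -> nat) : Prop :=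
  bijective f /\ forall A : subset_k k, Q A <-> Q (image_set f A).

(* Syntax of L_{omega omega}(Q): first-order logic with equality, no
   non-logical symbols, plus the quantifier Q binding a k-tuple of
   variables. Variables are natural numbers. *)
Inductive formula (k : nat) : Type :=
| FEq  : nat -> nat -> formula k
| FNot : formula k -> formula k
| FAnd : formula k -> formula k -> formula k
| FOr  : formula k -> formula k -> formula k
| FEx  : nat -> formula k -> formula k
| FAll : nat -> formula k -> formula k
| FQ   : k.-tuple nat -> formula k -> formula k.

Definition upd (e : nat -> nat) (x a : nat) : nat -> nat :=
  fun v => if v == x then a else e v.

Fixpoint upds (e : nat -> nat) (xs vs : seq nat) : nat -> nat :=
  match xs, vs with
  | x :: xs', v :: vs' => upds (upd e x v) xs' vs'
  | _, _ => e
  end.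

Fixpoint sat (k : nat) (Q : quantifier k) (e : nat -> nat) (phi : formula k)
  : Prop :=
  match phi with
  | FEq x y => e x = e y
  | FNot p => ~ sat Q e p
  | FAnd p q => sat Q e p /\ sat Q e q
  | FOr p q => sat Q e p \/ sat Q e q
  | FEx x p => exists a, sat Q (upd e x a) p
  | FAll x p => forall a, sat Q (upd e x a) p
  | FQ xs p => Q (fun a : k.-tuple nat => sat Q (upds e xs a) p)
  end.

Definition definable (k : nat) (Q : quantifier k) (n : nat)
  (B : n.-tuple nat -> Prop) : Prop :=
  exists phi : formula k, forall e : nat -> nat,
    sat Q e phi <-> B [tuple e i | i < n].

Definition aut_orbit (k : nat) (Q : quantifier k) (n : nat) (a : n.-tuple nat)
  : n.-tuple nat -> Prop :=
  fun b => exists g, Aut Q g /\ b = map_tuple g a.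

From mathcomp Require Import all_boot.
From Stdlib Require Import Classical ClassicalEpsilon.
Set Implicit Arguments. Unset Strict Implicit. Unset Printing Implicit Defensive.

(* By compactness of 2^{N^k}, a clopen quantifier depends on only finitely many
   coordinates, so [Q A] only depends on the trace of [A] on [s^k] for a finite
   support [s], which we take of minimal size. The orbit of [a] is then defined
   by: "there are [z] such that [x, z] has the same Q-type as [a, s]", i.e. the
   same equalities and, for each set [P] of k-tuples of indices, [Q] holds of
   the tuples named by [P] in [x, z] iff it does in [a, s]. An automorphism [g]
   with [g a = x] provides [z := g s]. Conversely, the elements of [s] whose
   witness lies in [s] again form a support, so by minimality [z] enumerates
   [s]; hence the partial map [a, s |-> x, z] extends to a permutation of N
   that preserves [s], and such a permutation fixes [Q]. *)

Definition decide (P : Prop) : bool :=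
  if excluded_middle_informative P then true else false.

Lemma decideP (P : Prop) : decide P <-> P.
Proof. by rewrite /decide; case: excluded_middle_informative. Qed.

Section Compactness.

Variables (k : nat) (Q : quantifier k).

(* Tuples are addressed through their code [pickle t]: this enumerates the
   coordinates of the Cantor space 2^{N^k}. *)
Definition agree_below (m : nat) (A B : subset_k k) :=
  forall t : k.-tuple nat, pickle t < m -> (A t <-> B t).

Definition cylinder_determined (A : subset_k k) (m : nat) :=
  exists N, forall B C, agree_below m A B -> agree_below m A C ->
    agree_below N B C -> (Q B <-> Q C).

Definition set_code (A : subset_k k) (m : nat) (b : bool) : subset_k k :=
  fun t => if pickle t == m then is_true b else A t.

Definition holds_at_code (B : subset_k k) (m : nat) :=
  exists t, pickle t = m /\ B t.

Lemma agree_below_sym m A B : agree_below m A B -> agree_below m B A.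
Proof. by move=> AB t lt; split=> /(AB t lt). Qed.

Lemma agree_below_trans m A B C :
  agree_below m A B -> agree_below m B C -> agree_below m A C.
Proof. by move=> AB BC t lt; split=> [/(AB t lt)/(BC t lt) | /(BC t lt)/(AB t lt)]. Qed.

Lemma agree_below_le m m' A B : m <= m' -> agree_below m' A B -> agree_below m A B.
Proof. by move=> le AB t lt; apply: AB; apply: leq_trans le. Qed.

Lemma agree_below_set_code m A B : agree_below m A B ->
  agree_below m.+1 (set_code A m (decide (holds_at_code B m))) B.
Proof.
move=> AB t; rewrite ltnS leq_eqVlt /set_code => /orP[/eqP tm | lt].
  rewrite tm eqxx decideP; split=> [[t' [t'm Bt']] | Bt]; last by exists t.
  by rewrite -(pcan_inj pickleK (etrans t'm (esym tm))).
by rewrite (ltn_eqF lt); apply: AB.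
Qed.

Lemma holds_at_code_agree m N B C : m < N -> agree_below N B C ->
  decide (holds_at_code B m) = decide (holds_at_code C m).
Proof.
move=> lt BC; apply/idP/idP => /decideP [t [tm h]]; apply/decideP; exists t;
  by split=> //; apply/(BC t); rewrite // tm.
Qed.

Lemma cylinder_split A m : ~ cylinder_determined A m ->
  exists b, ~ cylinder_determined (set_code A m b) m.+1.
Proof.
move=> undet; apply: NNPP => split_det; apply: undet.
have det b : cylinder_determined (set_code A m b) m.+1.
  by apply: NNPP => ndet; apply: split_det; exists b.
have [N1 det1] := det true; have [N2 det2] := det false.
exists (maxn m.+1 (maxn N1 N2)) => B C AB AC BC.
have BCm := holds_at_code_agree (leq_maxl _ _) BC.
have [ABm ACm] := (agree_below_set_code AB, agree_below_set_code AC).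
rewrite BCm in ABm; case: (decide (holds_at_code C m)) ABm ACm => ABm ACm.
  by apply: det1 ABm ACm _; apply: agree_below_le BC; rewrite !leq_max leqnn orbT.
by apply: det2 ABm ACm _; apply: agree_below_le BC; rewrite !leq_max leqnn !orbT.
Qed.

Lemma clopen_locally_constant : clopen Q ->
  forall X, exists M, forall B, agree_below M X B -> (Q B <-> Q X).
Proof.
have nbhd (U : quantifier k) X : open_set U -> U X ->
    exists M, forall B, agree_below M X B -> U B.
  move=> openU /openU [F HF]; exists (\max_(t <- F) (pickle t).+1) => B XB.
  by apply: HF => t tF; apply: XB; apply: leq_bigmax_seq.
move=> [openQ openNQ] X; case: (classic (Q X)) => QX.
  by have [M HM] := nbhd _ _ openQ QX; exists M => B /HM.
by have [M HM] := nbhd _ _ openNQ QX; exists M => B /HM.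
Qed.

Lemma clopen_finitely_determined : clopen Q ->
  exists N, forall B C, agree_below N B C -> (Q B <-> Q C).
Proof.
move=> clopenQ; apply: NNPP => undet.
have undet0 : ~ cylinder_determined (fun _ => False) 0.
  by move=> [N HN]; apply: undet; exists N => B C; apply: HN.
have step A m : exists b,
    ~ cylinder_determined A m -> ~ cylinder_determined (set_code A m b) m.+1.
  case: (classic (cylinder_determined A m)) => [det | /cylinder_split [b Hb]].
    by exists true.
  by exists b.
have /(choice _) [F HF] := fun A => choice _ (step A).
pose fix branch m : subset_k k :=
  if m is m'.+1 then set_code (branch m') m' (F (branch m') m') else fun _ => False.
have branch_undet m : ~ cylinder_determined (branch m) m by elim: m => //= m /HF.
have stable m j t : pickle t < m -> branch (m + j) t = branch m t.
  move=> lt; elim: j => [|j IH]; first by rewrite addn0.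
  by rewrite addnS /= /set_code ltn_eqF ?IH // ltn_addr.
pose X t := branch (pickle t).+1 t.
have agree_branch m : agree_below m (branch m) X.
  by move=> t lt; rewrite /X -(subnKC lt) stable.
have [M HM] := clopen_locally_constant clopenQ X.
apply: (branch_undet M); exists 0 => B C AB AC _.
have XA B' : agree_below M (branch M) B' -> agree_below M X B'.
  by apply: agree_below_trans; apply: agree_below_sym.
by rewrite (HM B (XA B AB)) (HM C (XA C AC)).
Qed.

End Compactness.

Definition support k (Q : quantifier k) (s : seq nat) :=
  forall A B : subset_k k,
    (forall t : k.-tuple nat, all (mem s) t -> (A t <-> B t)) -> (Q A <-> Q B).

Lemma support_ext k (Q : quantifier k) s : support Q s ->
  forall A B : subset_k k, (forall t, A t <-> B t) -> (Q A <-> Q B).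
Proof. by move=> supp A B AB; apply: supp => t _; apply: AB. Qed.

Lemma support_restrict k (Q : quantifier k) s : support Q s ->
  forall A : subset_k k, Q A <-> Q (fun t => all (mem s) t /\ A t).
Proof. by move=> supp A; apply: supp => t st; split=> [|[]]. Qed.

Lemma finitely_determined_support k (Q : quantifier k) N :
  (forall B C, agree_below N B C -> (Q B <-> Q C)) -> exists K, support Q (iota 0 K).
Proof.
move=> det; exists (\max_(t <- pmap unpickle (iota 0 N)) \max_(x <- t) x.+1).
move=> A B AB; apply: det => t lt; apply: AB; apply/allP => x xt.
rewrite /= mem_iota add0n.
have tmax : x < \max_(y <- t) y.+1 by apply: leq_bigmax_seq.
apply: leq_trans tmax _; apply: leq_bigmax_seq => //.
by rewrite mem_pmap; apply/mapP; exists (pickle t); rewrite ?mem_iota ?pickleK.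
Qed.

Lemma exists_minimal_support k (Q : quantifier k) : clopen Q ->
  exists s, [/\ uniq s, support Q s &
    forall s', uniq s' -> support Q s' -> size s <= size s'].
Proof.
move=> /clopen_finitely_determined [N /finitely_determined_support [K suppK]].
pose P m := decide (exists s, [/\ uniq s, size s = m & support Q s]).
have exP : exists m, P m.
  by exists K; apply/decideP; exists (iota 0 K); rewrite iota_uniq size_iota.
case: (ex_minnP exP) => m /decideP [s [us <- ss]] min; exists s; split=> // s' us' ss'.
by apply: min; apply/decideP; exists s'.
Qed.

(* The permutation of nat sending [u`_i] to [v`_i]; the points of [v] outside [u]
   are sent back, in order, onto the points of [u] outside [v]. *)
Definition perm_extending (u v : seq nat) (x : nat) : nat :=
  if x \in u then nth 0 v (index x u)
  else if x \in [seq y <- v | y \notin u]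
       then nth 0 [seq y <- u | y \notin v] (index x [seq y <- v | y \notin u])
       else x.

Lemma size_filter_notin (u v : seq nat) : uniq u -> uniq v -> size u = size v ->
  size [seq y <- v | y \notin u] = size [seq y <- u | y \notin v].
Proof.
move=> uu uv suv.
have common : count (mem u) v = count (mem v) u.
  rewrite -!size_filter; apply/perm_size/uniq_perm; rewrite ?filter_uniq //.
  by move=> x; rewrite !mem_filter andbC.
apply/eqP; rewrite !size_filter -(eqn_add2l (count (mem u) v)) count_predC.
by rewrite common count_predC suv.
Qed.

Lemma perm_extending_cancel (u v : seq nat) : uniq u -> uniq v -> size u = size v ->
  cancel (perm_extending u v) (perm_extending v u).
Proof.
move=> uu uv suv x; rewrite /perm_extending.
have sizeD := size_filter_notin uu uv suv.
case xu: (x \in u).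
  have lt : index x u < size v by rewrite -suv index_mem xu.
  by rewrite (mem_nth 0 lt) index_uniq ?suv // nth_index.
case xvu: (x \in [seq y <- v | y \notin u]).
  have lt : index x [seq y <- v | y \notin u] < size [seq y <- u | y \notin v].
    by rewrite -sizeD index_mem xvu.
  have := mem_nth 0 lt; rewrite mem_filter => /andP [/negbTE -> ->].
  by rewrite index_uniq ?filter_uniq // nth_index.
have -> : x \in v = false by apply: contraFF xvu; rewrite mem_filter xu.
by rewrite mem_filter xu andbF.
Qed.

Lemma partial_injection_extends (N : nat) (f h : nat -> nat) :
  (forall i j, i < N -> j < N -> (f i = f j <-> h i = h j)) ->
  exists g, bijective g /\ forall i, i < N -> g (f i) = h i.
Proof.
move=> fh; pose L := [seq f i | i <- iota 0 N]; pose u := undup L.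
pose v := [seq h (index x L) | x <- u].
have idxL x : x \in L -> index x L < N /\ f (index x L) = x.
  move=> xL; have ltN : index x L < N.
    by rewrite -[X in _ < X](size_iota 0) -(size_map f) index_mem.
  by split=> //; have := nth_index 0 xL; rewrite (nth_map 0) ?size_iota // nth_iota.
have uv : uniq v.
  rewrite map_inj_in_uniq ?undup_uniq // => x y; rewrite !mem_undup => xL yL hxy.
  have [ltx fx] := idxL x xL; have [lty fy] := idxL y yL.
  by rewrite -fx -fy; apply/(fh _ _ ltx lty).
have suv : size u = size v by rewrite size_map.
exists (perm_extending u v); split.
  by exists (perm_extending v u); apply: perm_extending_cancel; rewrite ?undup_uniq.
move=> i lt; have fiL : f i \in L by apply: map_f; rewrite mem_iota.
rewrite /perm_extending mem_undup fiL (nth_map 0) ?index_mem ?mem_undup //.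
have [lt' fi'] := idxL _ fiL.
by rewrite nth_index ?mem_undup //; apply/(fh _ _ lt' lt).
Qed.

Lemma upds_notin (e : nat -> nat) xs vs x : x \notin xs -> upds e xs vs x = e x.
Proof.
elim: xs e vs => [|y xs IH] e [|v vs] //=.
by rewrite in_cons negb_or => /andP [/negbTE xy xn]; rewrite IH // /upd xy.
Qed.

Lemma upds_nth (e : nat -> nat) xs vs j : uniq xs -> size vs = size xs ->
  j < size xs -> upds e xs vs (nth 0 xs j) = nth 0 vs j.
Proof.
elim: xs e vs j => [|y xs IH] e [|v vs] [|j] //= /andP [yxs uxs] [svs] lt.
  by rewrite upds_notin // /upd eqxx.
by rewrite IH.
Qed.

Lemma upds_iota_lt (e : nat -> nat) n m vs i : i < n -> upds e (iota n m) vs i = e i.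
Proof. by move=> lt; rewrite upds_notin // mem_iota leqNgt lt. Qed.

Lemma upds_iota (e : nat -> nat) n m vs i : size vs = m -> n <= i < n + m ->
  upds e (iota n m) vs i = nth 0 vs (i - n).
Proof.
move=> svs /andP [le lt]; have ltm : i - n < m by rewrite ltn_subLR.
by rewrite -{1}(subnKC le) -(nth_iota 0 n ltm) upds_nth ?iota_uniq ?size_iota.
Qed.

Section Definability.

Variables (k : nat) (Q : quantifier k).

Definition env_definable (R : (nat -> nat) -> Prop) :=
  exists phi : formula k, forall e, sat Q e phi <-> R e.

Lemma env_definable_ext R R' :
  (forall e, R e <-> R' e) -> env_definable R -> env_definable R'.
Proof. by move=> RR' [phi Hphi]; exists phi => e; rewrite Hphi. Qed.

Lemma env_definable_eq i j : env_definable (fun e => e i = e j).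
Proof. by exists (FEq k i j). Qed.

Lemma env_definable_and R1 R2 : env_definable R1 -> env_definable R2 ->
  env_definable (fun e => R1 e /\ R2 e).
Proof. by move=> [p Hp] [q Hq]; exists (FAnd p q) => e /=; rewrite Hp Hq. Qed.

Lemma env_definable_iff R (P : Prop) : env_definable R -> env_definable (fun e => R e <-> P).
Proof.
move=> [p Hp]; case: (classic P) => HP.
  by exists p => e; rewrite Hp; split=> [|[]]; auto.
by exists (FNot p) => e /=; rewrite Hp; split=> [|[]]; auto.
Qed.

Lemma env_definable_all_in (T : eqType) (l : seq T) (R : T -> (nat -> nat) -> Prop) :
  (forall x, env_definable (R x)) -> env_definable (fun e => forall x, x \in l -> R x e).
Proof.
move=> defR; elim: l => [|y l [q Hq]].
  by exists (FEq k 0 0) => e /=; split.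
have [p Hp] := defR y; exists (FAnd p q) => e /=; rewrite Hp Hq; split.
  by move=> [Ry Rl] x; rewrite in_cons => /predU1P [-> | /Rl].
by move=> Rl; split=> [|x xl]; apply: Rl; rewrite in_cons ?eqxx ?xl ?orbT.
Qed.

Lemma env_definable_ex_in (T : eqType) (l : seq T) (R : T -> (nat -> nat) -> Prop) :
  (forall x, env_definable (R x)) -> env_definable (fun e => exists2 x, x \in l & R x e).
Proof.
move=> defR; elim: l => [|y l [q Hq]].
  by exists (FNot (FEq k 0 0)) => e /=; split=> // -[].
have [p Hp] := defR y; exists (FOr p q) => e /=; rewrite Hp Hq; split.
  case=> [Ry | [x xl Rx]]; first by exists y; rewrite ?mem_head.
  by exists x; rewrite ?in_cons ?xl ?orbT.
by move=> [x]; rewrite in_cons => /predU1P [-> | xl] Rx; [left | right; exists x].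
Qed.

Fixpoint exists_vars (xs : seq nat) (phi : formula k) : formula k :=
  if xs is x :: xs' then FEx x (exists_vars xs' phi) else phi.

Lemma sat_exists_vars xs phi e : sat Q e (exists_vars xs phi) <->
  exists2 vs, size vs = size xs & sat Q (upds e xs vs) phi.
Proof.
elim: xs e => [|x xs IH] e /=.
  by split=> [Hphi | [[|v vs] //]]; exists [::].
split=> [[v /IH [vs svs Hphi]] | [[|v vs] //= [svs] Hphi]].
  by exists (v :: vs); rewrite /= ?svs.
by exists v; apply/IH; exists vs.
Qed.

Lemma env_definable_exists_vars R xs : env_definable R ->
  env_definable (fun e => exists2 vs, size vs = size xs & R (upds e xs vs)).
Proof.
move=> [p Hp]; exists (exists_vars xs p) => e; rewrite sat_exists_vars.
by split=> -[vs svs /Hp]; exists vs.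
Qed.

Lemma env_definable_Q R (xs : k.-tuple nat) :
  (forall A B : subset_k k, (forall t, A t <-> B t) -> (Q A <-> Q B)) ->
  env_definable R -> env_definable (fun e => Q (fun t => R (upds e xs t))).
Proof. by move=> extQ [p Hp]; exists (FQ xs p) => e /=; apply: extQ => t. Qed.

End Definability.

Lemma tuple_choice k (I U : Type) (R : I -> U -> Prop) (q : k.-tuple U) :
  (forall j : 'I_k, exists i, R i (tnth q j)) ->
  exists p : k.-tuple I, forall j, R (tnth p j) (tnth q j).
Proof.
by move=> /fin_all_exists [f Hf]; exists [tuple f j | j < k] => j; rewrite tnth_mktuple.
Qed.

Lemma eq_map_tuple_tnth k (T U : Type) (f : T -> U) (p : k.-tuple T) (t : k.-tuple U) :
  t = map_tuple f p <-> forall j, tnth t j = f (tnth p j).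
Proof.
split=> [-> j | Ht]; first by rewrite tnth_map.
by apply: eq_from_tnth => j; rewrite Ht tnth_map.
Qed.

Lemma image_set_ext k g (A B : subset_k k) :
  (forall t, A t <-> B t) -> forall t, image_set g A t <-> image_set g B t.
Proof. by move=> AB t; split=> -[u [/AB Bu tE]]; exists u. Qed.

Section QTypes.

Variables (k : nat) (Q : quantifier k).
Hypothesis extQ : forall A B : subset_k k, (forall t, A t <-> B t) -> (Q A <-> Q B).

(* An index tuple [p] stands for the tuple [f p]: this is how a formula in the
   variables [0, .., N-1] speaks about subsets of [N^k]. *)
Definition tuples_at N (f : nat -> nat) (P : {set k.-tuple 'I_N}) : subset_k k :=
  fun t => exists2 p, p \in P & t = map_tuple (fun i : 'I_N => f i) p.

Definition same_Qtype N (f h : nat -> nat) :=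
  (forall i j : 'I_N, f i = f j <-> h i = h j) /\
  (forall P : {set k.-tuple 'I_N}, Q (tuples_at f P) <-> Q (tuples_at h P)).

Lemma tuples_at_eq N (f h : nat -> nat) (P : {set k.-tuple 'I_N}) :
  (forall i : 'I_N, f i = h i) -> forall t, tuples_at f P t <-> tuples_at h P t.
Proof.
move=> fh t; split=> -[p pP ->]; exists p => //;
  by apply/eq_map_tuple_tnth => j; rewrite tnth_map fh.
Qed.

Lemma image_set_tuples_at N g (f : nat -> nat) (P : {set k.-tuple 'I_N}) t :
  image_set g (tuples_at f P) t <-> tuples_at (g \o f) P t.
Proof.
split=> [[_ [[p pP ->] ->]] | [p pP ->]].
  by exists p => //; apply/eq_map_tuple_tnth => j; rewrite !tnth_map.
by exists (map_tuple (fun i : 'I_N => f i) p); split; [exists p |];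
  last by apply/eq_map_tuple_tnth => j; rewrite !tnth_map.
Qed.

Lemma tuples_at_definable N (P : {set k.-tuple 'I_N}) :
  env_definable Q (fun e => Q (tuples_at e P)).
Proof.
pose R (e : nat -> nat) :=
  exists2 p, p \in enum P & forall j, j \in enum 'I_k -> e (N + j) = e (tnth p j).
have defR : env_definable Q R.
  apply: env_definable_ex_in => p; apply: env_definable_all_in => j.
  exact: env_definable_eq.
apply: env_definable_ext (env_definable_Q [tuple of iota N k] extQ defR) => e.
apply: extQ => t; have st : size t = k by rewrite size_tuple.
have newvar (j : 'I_k) : upds e (iota N k) t (N + j) = tnth t j.
  by rewrite upds_iota ?leq_addr ?ltn_add2l //= addKn (tnth_nth 0).
have oldvar (i : 'I_N) : upds e (iota N k) t i = e i by rewrite upds_iota_lt.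
split=> [[p pP Hp] | [p pP tE]]; exists p.
- by rewrite -mem_enum.
- by apply/eq_map_tuple_tnth => j; rewrite -newvar Hp ?mem_enum.
- by rewrite mem_enum.
- by move=> j _; rewrite newvar oldvar tE tnth_map.
Qed.

Lemma same_Qtype_definable N (f : nat -> nat) : env_definable Q (same_Qtype N f).
Proof.
apply: env_definable_and.
  apply: env_definable_ext (env_definable_all_in (enum {: 'I_N * 'I_N})
    (fun ij => env_definable_iff (f ij.1 = f ij.2) (env_definable_eq Q ij.1 ij.2))) => e.
  split=> [H i j | H [i j] _ /=]; last by rewrite H.
  by have := H (i, j); rewrite mem_enum => /(_ isT); apply: iff_sym.
apply: env_definable_ext (env_definable_all_in (enum {: {set k.-tuple 'I_N}})
  (fun P => env_definable_iff (Q (tuples_at f P)) (tuples_at_definable P))) => e.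
split=> [H P | H P _]; last by rewrite H.
by apply: iff_sym; apply: H; rewrite mem_enum.
Qed.

Definition ref_env n (a : n.-tuple nat) (s : seq nat) (i : nat) := nth 0 (a ++ s) i.

Definition Qtype_extendable n (a : n.-tuple nat) (s : seq nat) (e : nat -> nat) :=
  exists2 vs, size vs = size s &
    same_Qtype (n + size s) (ref_env a s) (upds e (iota n (size s)) vs).

Lemma Qtype_extendable_definable n (a : n.-tuple nat) s :
  env_definable Q (Qtype_extendable a s).
Proof.
apply: env_definable_ext (env_definable_exists_vars (iota n (size s))
  (same_Qtype_definable (n + size s) (ref_env a s))) => e.
by rewrite size_iota.
Qed.

End QTypes.

Lemma inj_stable_preim (T : eqType) (g : T -> T) (s : seq T) :
  uniq s -> injective g -> {in s, forall x, g x \in s} -> forall x, g x \in s -> x \in s.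
Proof.
move=> us ginj gs x gx.
have sub : {subset map g s <= s} by move=> _ /mapP [y ys ->]; apply: gs.
have ugs : uniq (map g s) by rewrite map_inj_uniq.
have [_ eqs] := uniq_min_size ugs sub (eq_leq (esym (size_map g s))).
by rewrite -(mem_map ginj) eqs.
Qed.

Section Orbits.

Variables (k : nat) (Q : quantifier k) (n : nat) (a : n.-tuple nat) (s : seq nat).
Hypotheses (us : uniq s) (suppQ : support Q s).

Local Notation N := (n + size s).
Local Notation ref := (ref_env a s).

Lemma ref_env_lt i : i < n -> ref i = nth 0 a i.
Proof. by move=> lt; rewrite /ref_env nth_cat size_tuple lt. Qed.

Lemma ref_env_ge i : n <= i -> ref i = nth 0 s (i - n).
Proof. by move=> le; rewrite /ref_env nth_cat size_tuple ltnNge le. Qed.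

Lemma ref_env_image : [seq ref i | i <- iota 0 N & n <= i] = s.
Proof.
rewrite iotaD filter_cat add0n (eq_in_filter (a2 := pred0)) ?filter_pred0; last first.
  by move=> i; rewrite mem_iota add0n => /andP [_ lt]; rewrite /= leqNgt lt.
rewrite (eq_in_filter (a2 := predT)) ?filter_predT; last first.
  by move=> i; rewrite mem_iota => /andP [].
rewrite -[n in iota n](addn0) iotaDl -map_comp -[RHS](mkseq_nth 0).
by apply: eq_map => j /=; rewrite ref_env_ge ?leq_addr ?addKn.
Qed.

Definition index_set (D : pred nat) (X : subset_k k) : {set k.-tuple 'I_N} :=
  [set p : k.-tuple 'I_N |
    all (fun i : 'I_N => D i) p && decide (X (map_tuple (fun i : 'I_N => ref i) p))].

Lemma tuples_at_index_set D X (t : k.-tuple nat) : tuples_at ref (index_set D X) t <->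
  X t /\ all (mem [seq ref i | i <- iota 0 N & D i]) t.
Proof.
split=> [[p] | [Xt /all_tnthP tD]].
  rewrite inE => /andP [/all_tnthP pD /decideP Xp] tE; split; first by rewrite tE.
  apply/all_tnthP => j; rewrite tE tnth_map /=; apply: map_f.
  by rewrite mem_filter pD mem_iota /=.
have [p Hp] : exists p : k.-tuple 'I_N, forall j, D (tnth p j) /\ tnth t j = ref (tnth p j).
  apply: (tuple_choice (R := fun (i : 'I_N) x => D i /\ x = ref i)) => j.
  have /mapP [i] := tD j; rewrite mem_filter mem_iota /= => /andP [Di lt] ->.
  by exists (Ordinal lt).
have tE : t = map_tuple (fun i : 'I_N => ref i) p.
  by apply/eq_map_tuple_tnth => j; have [] := Hp j.
exists p => //; rewrite inE; apply/andP; split; last by apply/decideP; rewrite -tE.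
by apply/all_tnthP => j; have [] := Hp j.
Qed.

Lemma support_index_set X : Q X <-> Q (tuples_at ref (index_set (leq n) X)).
Proof.
rewrite (support_restrict suppQ X); apply: (support_ext suppQ) => t.
by rewrite tuples_at_index_set ref_env_image; split=> -[].
Qed.

Lemma tuples_at_restrict (f : nat -> nat) (P : {set k.-tuple 'I_N}) (t : k.-tuple nat) :
  all (mem s) t /\ tuples_at f P t <->
  tuples_at f [set p in P | all (fun i : 'I_N => f i \in s) p] t.
Proof.
split=> [[/all_tnthP ts [p pP tE]] | [p]].
  exists p; rewrite // inE pP; apply/all_tnthP => j.
  by have := ts j; rewrite tE tnth_map.
rewrite inE => /andP [pP /all_tnthP ps] tE; split; last by exists p.
by apply/all_tnthP => j; rewrite tE tnth_map; apply: ps.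
Qed.

Section SameType.

Variable f : nat -> nat.
Hypothesis Tf : same_Qtype Q N ref f.

Lemma same_Qtype_inj i j : i < N -> j < N -> (ref i = ref j <-> f i = f j).
Proof. by move=> lti ltj; apply: (Tf.1 (Ordinal lti) (Ordinal ltj)). Qed.

(* The indices [i >= n] with [f i \in s] pick out a sub-list of [s] that is
   again a support; minimality of [s] then forces [f] to map [s] into [s]. *)
Lemma same_Qtype_support_image :
  support Q [seq ref i | i <- iota 0 N & (f i \in s) && (n <= i)].
Proof.
set S' := (X in support Q X).
suff key X : Q X <-> Q (fun t => X t /\ all (mem S') t).
  move=> A B AB; rewrite key (key B); apply: (support_ext suppQ) => t.
  by split=> -[Xt tS']; split=> //; apply/(AB t tS').
rewrite support_index_set Tf.2 (support_restrict suppQ).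
rewrite (support_ext suppQ (tuples_at_restrict f _)) -Tf.2.
apply: (support_ext suppQ) => t; rewrite -tuples_at_index_set.
suff -> : [set p in index_set (leq n) X | all (fun i : 'I_N => f i \in s) p] =
          index_set (fun i => (f i \in s) && (n <= i)) X by [].
apply/setP => p; rewrite !inE all_predI.
by case: (all _ p); case: decide; case: (all _ p).
Qed.

Hypothesis minimal : forall s', uniq s' -> support Q s' -> size s <= size s'.

Lemma same_Qtype_maps_support i : n <= i < N -> f i \in s.
Proof.
move=> /andP [le lt]; set I := [seq i <- iota 0 N | n <= i].
have suppS' := same_Qtype_support_image.
rewrite (_ : [seq i <- _ | _] = [seq i <- I | f i \in s]) in suppS'; last first.
  by rewrite -filter_predI.
have uS' : uniq [seq ref i | i <- I & f i \in s].
  by apply: subseq_uniq us; rewrite -[X in subseq _ X]ref_env_image map_subseq ?filter_subseq.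
have := minimal uS' suppS'; rewrite -{1}ref_env_image !size_map => le_size.
have /allP allF : all (fun i => f i \in s) I.
  by rewrite all_count eqn_leq count_size -size_filter.
by apply: allF; rewrite mem_filter le mem_iota.
Qed.

End SameType.

Lemma image_set_restrict g (A : subset_k k) (t : k.-tuple nat) :
  (forall x, (g x \in s) = (x \in s)) ->
  all (mem s) t /\ image_set g A t <-> image_set g (fun u => all (mem s) u /\ A u) t.
Proof.
move=> gs; split=> [[/all_tnthP ts [u [Au tE]]] | [u [[/all_tnthP us' Au] tE]]].
  exists u; split=> //; split=> //; apply/all_tnthP => j.
  by have := ts j; rewrite tE tnth_map /= gs.
split; last by exists u.
by apply/all_tnthP => j; rewrite tE tnth_map /= gs; apply: us'.
Qed.

Lemma orbit_Qtype_extendable (e : nat -> nat) :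
  aut_orbit Q a [tuple e i | i < n] -> Qtype_extendable Q a s e.
Proof.
move=> [g [[bij_g autg] ga]]; exists (map g s); first by rewrite size_map.
set f := upds _ _ _.
have fE (i : 'I_N) : f i = g (ref i).
  case: (ltnP i n) => [lt | le].
    rewrite /f upds_iota_lt // ref_env_lt // -(tnth_mktuple e (Ordinal lt)) ga.
    by rewrite tnth_map (tnth_nth 0).
  by rewrite /f upds_iota ?size_map ?le ?ltn_ord // ref_env_ge // (nth_map 0) // ltn_subLR.
split=> [i j | P]; first by rewrite !fE; split=> [-> // | /(bij_inj bij_g)].
rewrite (autg (tuples_at ref P)); apply: (support_ext suppQ) => t.
by rewrite image_set_tuples_at; apply: tuples_at_eq => i; rewrite fE.
Qed.

Lemma Qtype_extendable_orbit (e : nat -> nat) :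
  (forall s', uniq s' -> support Q s' -> size s <= size s') ->
  Qtype_extendable Q a s e -> aut_orbit Q a [tuple e i | i < n].
Proof.
move=> minimal [vs _ Tf]; set f := upds _ _ _ in Tf.
have [g [bij_g gref]] := partial_injection_extends (same_Qtype_inj Tf).
have ginj := bij_inj bij_g.
have gs : {in s, forall x, g x \in s}.
  move=> x xs; have lt : n + index x s < N by rewrite ltn_add2l index_mem.
  rewrite -(nth_index 0 xs) -(addKn n (index x s)) -ref_env_ge ?leq_addr // gref //.
  by apply: (same_Qtype_maps_support Tf minimal); rewrite leq_addr.
have gsE x : (g x \in s) = (x \in s).
  by apply/idP/idP => [/(inj_stable_preim us ginj gs) | /gs].
exists g; split; last first.
  apply/eq_map_tuple_tnth => j; have ltN : j < N by rewrite (leq_trans (ltn_ord j)) ?leq_addr.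
  by rewrite tnth_mktuple (tnth_nth 0) -ref_env_lt // gref // /f upds_iota_lt.
split=> // A; rewrite support_index_set Tf.2 (support_restrict suppQ (image_set g A)).
apply: (support_ext suppQ) => t; rewrite image_set_restrict //.
transitivity (tuples_at (g \o ref) (index_set (leq n) A) t).
  by apply: tuples_at_eq => i; rewrite /= gref.
rewrite -image_set_tuples_at; apply: image_set_ext => u.
by rewrite tuples_at_index_set ref_env_image; split=> -[].
Qed.

End Orbits.


Theorem proposition18 (k : nat) (Q : quantifier k) :
  clopen Q ->
  forall (n : nat) (a : n.-tuple nat), definable Q (aut_orbit Q a).
Proof.
move=> clopenQ n a; have [s [us suppQ minimal]] := exists_minimal_support clopenQ.
have [phi Hphi] := Qtype_extendable_definable (support_ext suppQ) a s.
exists phi => e; rewrite Hphi; split; first exact: Qtype_extendable_orbit.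
exact: orbit_Qtype_extendable.
Qed.
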